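(* Let $\Sigma$ be a finite set of actions and consider KAT expressions over $\Sigma$ with the empty set of primitive tests. The deterministic fragment of KA is generated by sequential composition together with the constants $\mathsf{true}$ and $\mathsf{false}$: every term built from actions $p\in\Sigma$, $\mathsf{true}$ and $\mathsf{false}$ using $\cdot$ is deterministic, and for every deterministic $e\in\mathsf{KAT}(\Sigma,\emptyset)$ there is such a term $f$ with $L(f)=L(e)$.
   Context: $\mathsf{BA}(\emptyset)$: variable-free Boolean expressions $b::=\mathsf{false}\mid\mathsf{true}\mid b\vee c\mid b\wedge c\mid\overline b$. $\mathsf{KAT}(\Sigma,\emptyset)$ (KA-terms): $e::=b\mid p\in\Sigma\mid e+f\mid e\cdot f\mid e^*$. There is one atom, $\mathsf{At}_\emptyset=\{\emptyset\}$; guarded strings are words in $\mathsf{At}(\Sigma\mathsf{At})^*$. $w'\alpha\diamond\alpha x'=w'\alpha x'$; $L\diamond K=\{w\diamond x:w\in L,x\in K\}$; $L^{(0)}=\mathsf{At}$, $L^{(n+1)}=L\diamond L^{(n)}$, $L^{( * )}=\bigcup_nL^{(n)}$. $L(b)=\{\emptyset\}$ if $b$ evaluates to true and $\emptyset$ otherwise, $L(p)=\{\alpha p\beta\}$, $L(e+f)=L(e)\cup L(f)$, $L(ef)=L(e)\diamond L(f)$, $L(e^* )=L(e)^{( * )}$. An expression $e$ is deterministic if $L(e)$ is deterministic: for distinct $w,w'\in L(e)$, $w$ is not a proper prefix of $w'$ and the first position where they differ is an atom (equivalently, its relational interpretation is a partial function whenever each action is interpreted as a partial function). *)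

From mathcomp Require Import all_boot.
Set Implicit Arguments. Unset Strict Implicit. Unset Printing Implicit Defensive.

Inductive bexp : Type :=
| BFalse | BTrue | BOr (b c : bexp) | BAnd (b c : bexp) | BNot (b : bexp).

Fixpoint beval (b : bexp) : bool :=
  match b with
  | BFalse => false | BTrue => true
  | BOr b c => beval b || beval c
  | BAnd b c => beval b && beval c
  | BNot b => ~~ beval b
  end.

Inductive kexp (S : Type) : Type :=
| KTest (b : bexp)
| KAct (p : S)
| KPlus (e f : kexp S)
| KSeq (e f : kexp S)
| KStar (e : kexp S).
Arguments KTest {S} b.

(* Guarded strings over the single atom emptyset: alpha p1 alpha p2 ... pn alpha
   is represented by the action word [:: p1; ...; pn] (the atoms are forced). *)
Definition gstring (S : Type) := seq S.
Definition lang (S : Type) := gstring S -> Prop.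

Inductive sym (S : Type) : Type := Atom | Act (p : S).
Arguments Atom {S}.

Definition gs_syms (S : Type) (w : gstring S) : seq (sym S) :=
  Atom :: flatten [seq [:: Act p; Atom] | p <- w].

(* guarded concatenation: w' alpha <> alpha x' = w' alpha x' (single atom) *)
Definition lconc (S : Type) (L K : lang S) : lang S :=
  fun w => exists u v, [/\ L u, K v & w = u ++ v].

Definition lAt (S : Type) : lang S := fun w => w = [::].

Fixpoint lpow (S : Type) (L : lang S) (n : nat) : lang S :=
  match n with
  | 0 => @lAt S
  | n.+1 => lconc L (lpow L n)
  end.

Definition lstar (S : Type) (L : lang S) : lang S := fun w => exists n, lpow L n w.

Fixpoint L (S : Type) (e : kexp S) : lang S :=
  match e with
  | KTest b => fun w => w = [::] /\ beval b
  | KAct p => fun w => w = [:: p]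
  | KPlus e f => fun w => L e w \/ L f w
  | KSeq e f => lconc (L e) (L f)
  | KStar e => lstar (L e)
  end.

Definition proper_prefix (T : Type) (x y : seq T) : Prop :=
  exists s, s <> [::] /\ y = x ++ s.

Definition deterministic (S : Type) (Lg : lang S) : Prop :=
  forall w w', Lg w -> Lg w' -> w <> w' ->
    ~ proper_prefix (gs_syms w) (gs_syms w') /\
    exists i, [/\ i < size (gs_syms w), i < size (gs_syms w'),
      (forall j, j < i -> nth Atom (gs_syms w) j = nth Atom (gs_syms w') j),
      nth Atom (gs_syms w) i <> nth Atom (gs_syms w') i &
      nth Atom (gs_syms w) i = Atom \/ nth Atom (gs_syms w') i = Atom].

Definition det_expr (S : Type) (e : kexp S) : Prop := deterministic (L e).

Inductive det_frag (S : Type) : kexp S -> Prop :=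
| DF_act p : det_frag (KAct p)
| DF_true : det_frag (KTest BTrue)
| DF_false : det_frag (KTest BFalse)
| DF_seq e f : det_frag e -> det_frag f -> det_frag (KSeq e f).

From Stdlib Require Import Classical.
From mathcomp Require Import all_boot.
Set Implicit Arguments. Unset Strict Implicit.

(* With a single atom, the symbol sequence of a guarded string alternates
   atom, action, atom, ..., so atoms sit exactly at the even positions.  Two
   distinct strings therefore first differ at an odd position (two actions)
   or one is a prefix of the other, and a deterministic language has at most
   one element.  Conversely every term of the fragment denotes at most one
   string, and a language with at most one string is denoted by [false] or by
   the product of the actions of its unique word. *)

Definition subsingleton (S : Type) (Lg : lang S) : Prop :=
  forall w w', Lg w -> Lg w' -> w = w'.

Lemma nth_gs_syms_atom (S : Type) (w : gstring S) i :
  i < size (gs_syms w) -> nth Atom (gs_syms w) i = Atom <-> ~~ odd i.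
Proof.
elim: w i => [|p w IH] [|[|i]] //= lt_i; try by split.
by rewrite negbK; apply: IH.
Qed.

Lemma deterministicP (S : Type) (Lg : lang S) :
  deterministic Lg <-> subsingleton Lg.
Proof.
split=> [detL w w' Lw Lw'|subL w w' Lw Lw' neq_ww']; last first.
  by case: neq_ww'; apply: subL.
apply: NNPP => neq_ww'.
have [_ [i [lt_i lt_i' _ neq_i atom_i]]] := detL w w' Lw Lw' neq_ww'.
apply: neq_i; case: atom_i => atom_i.
- by rewrite atom_i (nth_gs_syms_atom lt_i').2 // -(nth_gs_syms_atom lt_i).
- by rewrite atom_i (nth_gs_syms_atom lt_i).2 // -(nth_gs_syms_atom lt_i').
Qed.

Lemma det_frag_subsingleton (S : Type) (e : kexp S) :
  det_frag e -> subsingleton (L e).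
Proof.
elim=> [p|||e1 e2 _ IH1 _ IH2] w w' /=.
- by move=> -> ->.
- by move=> [-> _] [-> _].
- by case.
- move=> [u [v [Lu Lv ->]]] [u' [v' [Lu' Lv' ->]]].
  by rewrite (IH1 _ _ Lu Lu') (IH2 _ _ Lv Lv').
Qed.

Fixpoint word_kexp (S : Type) (w : seq S) : kexp S :=
  if w is p :: w' then KSeq (KAct p) (word_kexp w') else KTest BTrue.

Lemma det_frag_word_kexp (S : Type) (w : seq S) : det_frag (word_kexp w).
Proof. by elim: w => [|p w IH] /=; do !constructor. Qed.

Lemma L_word_kexp (S : Type) (w v : seq S) : L (word_kexp w) v <-> v = w.
Proof.
elim: w v => [|p w IH] v /=; first by split=> [[]|->].
split=> [[u [x [-> /IH -> ->]]] // | ->].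
by exists [:: p], w; split=> //; apply/IH.
Qed.

Lemma subsingleton_det_frag (S : Type) (Lg : lang S) : subsingleton Lg ->
  exists f : kexp S, det_frag f /\ (forall w, L f w <-> Lg w).
Proof.
move=> subL; have [[w Lw] | L_empty] := classic (exists w, Lg w).
- exists (word_kexp w); split=> [|v]; first exact: det_frag_word_kexp.
  by rewrite L_word_kexp; split=> [-> // | Lv]; apply: subL.
- exists (KTest BFalse); split=> [|v /=]; first constructor.
  by split=> [[] // | Lv]; case: L_empty; exists v.
Qed.

Theorem theorem7p4 (S : finType) :
  (forall e : kexp S, det_frag e -> det_expr e) /\
  (forall e : kexp S, det_expr e ->
     exists f : kexp S, det_frag f /\ (forall w, L f w <-> L e w)).
Proof.
split=> e.
- by move/det_frag_subsingleton/deterministicP.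
- by move/deterministicP/subsingleton_det_frag.
Qed.
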